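(* Let $I$ be a real interval with $[-1,0]\subseteq I\subseteq\mathbb{R}_-$, and let $f\colon I^n\to\mathbb{R}$ be a nonconstant quasi-Lovász extension, $f=L\circ\varphi$. Then the following are equivalent: (i) $f_0$ is weakly homogeneous; (ii) there exists $A\subseteq[n]$ with $f_0(-\mathbf{1}_A)\neq 0$; (iii) $\varphi(-1)\neq0$. Moreover, in this case $f_0(x\mathbf{1}_A)=\frac{\varphi(x)}{\varphi(-1)}f_0(-\mathbf{1}_A)$ for all $x\in I$ and all $A\subseteq[n]$.
   Context: Notation: $[n]=\{1,\ldots,n\}$; $\mathbf{1}_A$ is the indicator tuple of $A\subseteq[n]$, $\mathbf{0}=\mathbf{1}_\varnothing$; for a function $g$, $g_0=g-g(\mathbf{0})$. For $\sigma$ a permutation of $[n]$, $\mathbb{R}^n_\sigma=\{\mathbf{x}: x_{\sigma(1)}\leq\cdots\leq x_{\sigma(n)}\}$, $A^\uparrow_\sigma(i)=\{\sigma(i),\ldots,\sigma(n)\}$, $A^\uparrow_\sigma(n+1)=\varnothing$. The Lovász extension $L_\psi\colon\mathbb{R}^n\to\mathbb{R}$ of $\psi\colon\{0,1\}^n\to\mathbb{R}$ is the function whose restriction to each $\mathbb{R}^n_\sigma$ is the unique affine function agreeing with $\psi$ at the points $\mathbf{1}_{A^\uparrow_\sigma(k)}$, $k\in[n+1]$; a Lovász extension is any such $L_\psi$. A quasi-Lovász extension is a function $f\colon I^n\to\mathbb{R}$ with $f(\mathbf{x})=L(\varphi(x_1),\ldots,\varphi(x_n))$, where $L$ is a Lovász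 extension and $\varphi\colon I\to\mathbb{R}$ is nondecreasing with $\varphi(0)=0$. A function $g\colon I^n\to\mathbb{R}$ with $I\subseteq\mathbb{R}_-$ is weakly homogeneous if there exists a nondecreasing $\phi\colon I\to\mathbb{R}$ with $\phi(0)=0$ such that $g(x\mathbf{1}_A)=-\phi(x)g(-\mathbf{1}_A)$ for all $x\in I$, $A\subseteq[n]$. *)

(* R is an arbitrary real field (the statement is order-algebraic). *)
From HB Require Import structures.
From mathcomp Require Import all_boot all_order all_algebra all_fingroup.
Set Implicit Arguments. Unset Strict Implicit. Unset Printing Implicit Defensive.
Import Order.TTheory GRing.Theory Num.Theory.
Local Open Scope ring_scope.

Definition ind (R : realFieldType) (n : nat) (A : {set 'I_n}) : 'I_n -> R :=
  fun i => (i \in A)%:R.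

Definition in_cone (R : realFieldType) (n : nat) (s : 'S_n) (x : 'I_n -> R) : Prop :=
  forall i j : 'I_n, (i <= j)%N -> x (s i) <= x (s j).

(* A^up_σ(k) = {σ(k),...,σ(n)}, k = 0..n (0-indexed; k = n gives the empty set) *)
Definition Aup (n : nat) (s : 'S_n) (k : 'I_n.+1) : {set 'I_n} :=
  [set i : 'I_n | (k <= (s^-1)%g i)%N].

(* L is the Lovász extension of psi : {0,1}^n -> R (subsets of [n] encode {0,1}^n):
   on each cone R^n_σ, L coincides with an affine function agreeing with psi
   at the points 1_{A^up_σ(k)}, k in [n+1]. *)
Definition lovasz_ext_of (R : realFieldType) (n : nat) (psi : {set 'I_n} -> R)
  (L : ('I_n -> R) -> R) : Prop :=
  forall s : 'S_n, exists (a : R) (c : 'I_n -> R),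
    (forall k : 'I_n.+1,
        a + \sum_(i < n) c i * ind R (Aup s k) i = psi (Aup s k)) /\
    (forall x, in_cone s x -> L x = a + \sum_(i < n) c i * x i).

Definition is_lovasz_ext (R : realFieldType) (n : nat) (L : ('I_n -> R) -> R) : Prop :=
  exists psi : {set 'I_n} -> R, lovasz_ext_of psi L.

Definition is_interval (R : realFieldType) (I : R -> Prop) : Prop :=
  forall x y z, I x -> I z -> x <= y -> y <= z -> I y.

Definition in_cube (R : realFieldType) (n : nat) (I : R -> Prop) (x : 'I_n -> R) : Prop :=
  forall i, I (x i).

Definition nondecr_on (R : realFieldType) (I : R -> Prop) (phi : R -> R) : Prop :=
  forall x y, I x -> I y -> x <= y -> phi x <= phi y.

Definition quasi_lovasz (R : realFieldType) (n : nat) (I : R -> Prop)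
  (f : ('I_n -> R) -> R) (L : ('I_n -> R) -> R) (phi : R -> R) : Prop :=
  [/\ is_lovasz_ext L, nondecr_on I phi, phi 0 = 0 &
      forall x, in_cube I x -> f x = L (fun i => phi (x i))].

Definition f0 (R : realFieldType) (n : nat) (g : ('I_n -> R) -> R) : ('I_n -> R) -> R :=
  fun x => g x - g (fun _ => 0).

Definition weakly_homogeneous (R : realFieldType) (n : nat) (I : R -> Prop)
  (g : ('I_n -> R) -> R) : Prop :=
  exists phi : R -> R, nondecr_on I phi /\ phi 0 = 0 /\
    forall (x : R) (A : {set 'I_n}), I x ->
      g (fun i => x * ind R A i) = - phi x * g (fun i => - ind R A i).

Definition nonconstant_on (R : realFieldType) (n : nat) (I : R -> Prop)
  (f : ('I_n -> R) -> R) : Prop :=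
  exists x y, in_cube I x /\ in_cube I y /\ f x <> f y.

From HB Require Import structures.
From mathcomp Require Import all_boot all_order all_algebra all_fingroup.
Set Implicit Arguments. Unset Strict Implicit. Unset Printing Implicit Defensive.
Import Order.TTheory GRing.Theory Num.Theory.
Local Open Scope ring_scope.
From Stdlib Require Import FunctionalExtensionality.

(* Since f = L o phi and phi maps x 1_A to phi(x) 1_A, and L_0 is positively
   homogeneous (the rays through -1_A stay inside one cone of linearity),
   f_0(x 1_A) = -phi(x) (L(-1_A) - L(0)).  Nonconstancy of f forces both
   factors to be nonzero somewhere: if phi vanishes on I then f = L(0), and if
   L(-1_A) = L(0) for every A then the affine pieces of L have no linear part,
   as the points -1_A with A a down-set of a cone span it.  All equivalences
   then come from reading off phi(-1) in this factorisation. *)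

Lemma exists_cone (R : realFieldType) (n : nat) (x : 'I_n -> R) :
  exists s : 'S_n, in_cone s x.
Proof.
set r := sort (fun i j => x i <= x j) (enum 'I_n).
have r_perm : perm_eq r (ord_tuple n) by rewrite val_ord_tuple perm_sort.
have [s r_def] := tuple_permP r_perm.
have r_sorted : sorted (fun i j => x i <= x j) r.
  by apply: sort_sorted => i j; apply: le_total.
have size_r : size r = n by rewrite r_def size_tuple.
have nth_r k0 (k : 'I_n) : nth k0 r k = s k.
  by rewrite r_def -tnth_nth tnth_mktuple tnth_ord_tuple.
exists s => i j le_ij.
have := sorted_leq_nth (fun a b c => @le_trans _ _ (x a) (x b) (x c))
  (fun a => lexx (x a)) i r_sorted i j.
by rewrite !inE size_r !ltn_ord !nth_r => /(_ isT isT le_ij).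
Qed.

Lemma lovasz_ext_homogeneous (R : realFieldType) (n : nat)
    (L : ('I_n -> R) -> R) (x : 'I_n -> R) (t : R) :
  is_lovasz_ext L -> 0 <= t ->
  L (fun i => t * x i) - L (fun _ => 0) = t * (L x - L (fun _ => 0)).
Proof.
move=> [psi L_psi] t_ge0.
have [s xs] := exists_cone x.
have [a [c [_ L_cone]]] := L_psi s.
have txs : in_cone s (fun i => t * x i) by move=> i j ij; rewrite ler_wpM2l ?xs.
have zs : in_cone s (fun _ : 'I_n => 0 : R) by move=> i j _.
rewrite (L_cone _ txs) (L_cone _ xs) (L_cone _ zs).
have -> : \sum_(i < n) c i * (0 : R) = 0 by apply: big1 => i _; rewrite mulr0.
rewrite addr0 !(addrC a) !addrK mulr_sumr.
by apply: eq_bigr => i _; rewrite mulrCA.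
Qed.

Lemma in_cone_neg_ind_down (R : realFieldType) (n : nat) (s : 'S_n) (m : nat) :
  in_cone s (fun k => - ind R [set k | ((s^-1)%g k < m)%N] k).
Proof.
move=> i j le_ij; rewrite /ind !inE !permK lerN2 ler_nat.
by case: ltnP => // lt_jm; rewrite (leq_ltn_trans le_ij lt_jm).
Qed.

Lemma lovasz_ext_const (R : realFieldType) (n : nat) (L : ('I_n -> R) -> R) :
  is_lovasz_ext L ->
  (forall A : {set 'I_n}, L (fun i => - ind R A i) = L (fun _ => 0)) ->
  forall z, L z = L (fun _ => 0).
Proof.
move=> [psi L_psi] LA z.
have [s zs] := exists_cone z.
have [a [c [_ L_cone]]] := L_psi s.
have L0 : L (fun _ => 0) = a.
  by rewrite (L_cone _ (fun i j _ => lexx 0)) big1 ?addr0 // => i _; rewrite mulr0.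
pose down m := [set k | ((s^-1)%g k < m)%N].
have sum_down m : \sum_(k < n) c k * ind R (down m) k = 0.
  have := LA (down m); rewrite (L_cone _ (in_cone_neg_ind_down R s m)) L0.
  under eq_bigr do rewrite mulrN.
  by rewrite sumrN -[RHS]addr0 => /addrI /eqP; rewrite oppr_eq0 => /eqP.
have c0 j : c j = 0.
  have : \sum_(k < n) c k * ind R (down ((s^-1)%g j).+1) k
         = c j + \sum_(k < n) c k * ind R (down ((s^-1)%g j)) k.
    rewrite (bigD1 j) // [X in _ = _ + X](bigD1 j) //= /ind !inE ltnSn ltnn.
    rewrite mulr1 mulr0 add0r; congr (_ + _); apply: eq_bigr => k kj.
    by rewrite !inE ltnS leq_eqVlt val_eqE (inj_eq (@perm_inj _ _)) (negbTE kj).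
  by rewrite !sum_down addr0.
by rewrite (L_cone _ zs) -L0 big1 ?addr0 // => i _; rewrite c0 mul0r.
Qed.

Section QuasiLovasz.

Variables (R : realFieldType) (n : nat) (I : R -> Prop).
Variables (f L : ('I_n -> R) -> R) (phi : R -> R).
Hypothesis I_le0 : forall x, I x -> x <= 0.
Hypothesis I0 : I 0.
Hypothesis f_qL : quasi_lovasz I f L phi.

Lemma quasi_lovasz_f0_ray (x : R) (A : {set 'I_n}) : I x ->
  f0 f (fun i => x * ind R A i)
  = - phi x * (L (fun i => - ind R A i) - L (fun _ => 0)).
Proof.
case: f_qL => L_ext phi_mono phi0 f_def Ix.
have ray_cube : in_cube I (fun i => x * ind R A i).
  by move=> i; rewrite /ind; case: (i \in A); rewrite ?mulr1 ?mulr0.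
have phi_ray : (fun i => phi (x * ind R A i)) = (fun i => - phi x * - ind R A i).
  apply: functional_extensionality => i; rewrite mulrNN /ind.
  by case: (i \in A); rewrite ?mulr1 ?mulr0.
rewrite /f0 !f_def // phi_ray phi0; apply: lovasz_ext_homogeneous => //.
by rewrite oppr_ge0 -phi0 phi_mono ?I_le0.
Qed.

Lemma nonconstant_quasi_lovasz_f0_ray : nonconstant_on I f ->
  exists x A, I x /\ f0 f (fun i => x * ind R A i) <> 0.
Proof.
case: f_qL => L_ext _ phi0 f_def [y1 [y2 [y1I [y2I f_y12]]]].
pose D A := L (fun i => - ind R A i) - L (fun _ => 0).
have [/existsP[A DA] | /existsPn D0] := boolP [exists A, D A != 0]; last first.
  have LA A : L (fun i => - ind R A i) = L (fun _ => 0).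
    by apply/eqP; rewrite -subr_eq0 -[_ == 0]negbK D0.
  by case: f_y12; rewrite !f_def // !(lovasz_ext_const L_ext LA).
have f_phi0 y : in_cube I y -> [forall i, phi (y i) == 0] -> f y = L (fun _ => 0).
  move=> yI /forallP phi_y0; rewrite f_def //; congr L.
  by apply: functional_extensionality => i; apply/eqP.
have [y yI] : exists2 y : 'I_n -> R, in_cube I y & [exists i, phi (y i) != 0].
  have [y1_0 |] := boolP [forall i, phi (y1 i) == 0]; last first.
    by rewrite negb_forall; exists y1.
  have [y2_0 |] := boolP [forall i, phi (y2 i) == 0]; last first.
    by rewrite negb_forall; exists y2.
  by case: f_y12; rewrite !f_phi0.
move=> /existsP[i phi_yi].
exists (y i), A; split => //; rewrite quasi_lovasz_f0_ray //.
by apply/eqP; rewrite mulf_neq0 ?oppr_eq0.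
Qed.

End QuasiLovasz.

Theorem proposition5 (R : realFieldType) (n : nat) (I : R -> Prop)
  (f : ('I_n -> R) -> R) (L : ('I_n -> R) -> R) (phi : R -> R) :
  is_interval I ->
  (forall x : R, -1 <= x -> x <= 0 -> I x) ->
  (forall x : R, I x -> x <= 0) ->
  quasi_lovasz I f L phi ->
  nonconstant_on I f ->
  (weakly_homogeneous I (f0 f) <->
     exists A : {set 'I_n}, f0 f (fun i => - ind R A i) <> 0) /\
  ((exists A : {set 'I_n}, f0 f (fun i => - ind R A i) <> 0) <-> phi (-1) <> 0) /\
  (phi (-1) <> 0 ->
     forall (x : R) (A : {set 'I_n}), I x ->
       f0 f (fun i => x * ind R A i) = phi x / phi (-1) * f0 f (fun i => - ind R A i)).
Proof.
move=> _ I_m10 I_le0 f_qL f_ncst.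
have I0 : I 0 by apply: I_m10; rewrite ?lerN10 ?lexx.
have Im1 : I (-1) by apply: I_m10; rewrite ?lerN10 ?lexx.
case: (f_qL) => _ phi_mono phi0 _.
pose D A := L (fun i => - ind R A i) - L (fun _ => 0).
have f0_ray x A : I x -> f0 f (fun i => x * ind R A i) = - phi x * D A.
  by move=> Ix; apply: (quasi_lovasz_f0_ray I_le0 I0 f_qL).
have f0_neg A : f0 f (fun i => - ind R A i) = - phi (-1) * D A.
  rewrite -f0_ray //; congr (f0 f _).
  by apply: functional_extensionality => i; rewrite mulN1r.
have [x0 [A0 [Ix0 f0_x0A0]]] := nonconstant_quasi_lovasz_f0_ray I_le0 I0 f_qL f_ncst.
have DA0 : D A0 != 0.
  by move/eqP: f0_x0A0; rewrite f0_ray // mulf_eq0 negb_or => /andP[].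
have ii_iii : (exists A, f0 f (fun i => - ind R A i) <> 0) -> phi (-1) <> 0.
  by move=> [A]; rewrite f0_neg => f0A phim1; apply: f0A; rewrite phim1 oppr0 mul0r.
have iii_formula : phi (-1) <> 0 -> forall x A, I x ->
    f0 f (fun i => x * ind R A i) = phi x / phi (-1) * f0 f (fun i => - ind R A i).
  by move=> /eqP phim1 x A Ix; rewrite f0_ray // f0_neg !mulNr mulrN mulrA divfK.
split; [split | split; [split; first exact: ii_iii | exact: iii_formula]].
- move=> [psi [_ [_ f0_psi]]]; exists A0 => f0A0.
  by apply: f0_x0A0; rewrite f0_psi // f0A0 mulr0.
- move=> /ii_iii phim1; exists (fun x => phi x * - (phi (-1))^-1); split; [|split].
  + move=> a b Ia Ib le_ab; rewrite ler_wpM2r ?phi_mono //.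
    by rewrite oppr_ge0 invr_le0 -phi0 phi_mono ?lerN10.
  + by rewrite phi0 mul0r.
  + by move=> x A Ix; rewrite iii_formula // mulrN opprK.
- by move=> /eqP phim1; exists A0; rewrite f0_neg; apply/eqP; rewrite mulf_neq0 ?oppr_eq0.
Qed.
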